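(* Consider the following slotted system. There are $N\ge2$ users and slots $t=1,\dots,T$. In each slot the BS schedules one user according to a scheduling algorithm $\pi$. Here $\pi$ may be randomized, and its choice in slot $t$ may depend on the adversary's actions in slots before $t$. An adversary uses a blocking matrix $\sigma\in\{0,1\}^{N\times T}$, where $\sigma_i(t)=0$ means user $i$'s channel is blocked in slot $t$. Feasibility means $\sum_{i,t}(1-\sigma_i(t))\le\alpha T$ and at most one user is blocked per slot, where $0<\alpha<1$. The ages satisfy $a_i(1)=1$ and $a_i(t+1)=1$ if user $i$ is scheduled in slot $t$ and $\sigma_i(t)=1$, and $a_i(t+1)=a_i(t)+1$ otherwise. Let $\Delta^{\pi,\sigma}=\frac1T\sum_{t=1}^T\frac1N\sum_{i=1}^N\mathbb{E}[a_i(t)]$ and $\Delta^*(T)=\sup_{\sigma}\inf_{\pi}\Delta^{\pi,\sigma}$, where $\sigma$ ranges over feasible blocking matrices. Let ''unif'' denote the algorithm that in each slot independently schedules a uniformly random user. Then, with $T\to\infty$ over values with $\alpha T\in\mathbb{Z}$, $$\limsup_{T\to\infty}\frac{\sup_{\sigma}\Delta^{\mathrm{unif},\sigma}}{\Delta^*(T)}\le\frac{1}{\alpha^2}.$$ That is, uniform scheduling is asymptotically $\frac1{\alpha^2}$-optimal.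
   Context: The expectation is over the scheduling randomness. *)

From HB Require Import structures.
From mathcomp Require Import all_boot all_order all_algebra.
From mathcomp Require Import boolp classical_sets reals.
Set Implicit Arguments. Unset Strict Implicit. Unset Printing Implicit Defensive.
Import Order.TTheory GRing.Theory Num.Theory.
Local Open Scope ring_scope.
Local Open Scope classical_set_scope.

(* Blocking matrix sigma : 'M[bool]_(N,T); sigma i t = true means sigma_i(t) = 1
   (user i NOT blocked in slot t), false means blocked.  Slots are 0-indexed:
   slot t : 'I_T corresponds to the paper's slot t+1. *)

Section Model.
Variables (R : realType) (N T : nat).

Definition blocking := 'M[bool]_(N, T).

Definition feasible (alpha : R) (sigma : blocking) : Prop :=
  (#|[set p : 'I_N * 'I_T | ~~ sigma p.1 p.2]|%:R <= alpha * T%:R) /\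
  (forall t : 'I_T, (#|[set i : 'I_N | ~~ sigma i t]| <= 1)%N).

(* sigma_i(t) read on nat indices (only indices < T are ever used) *)
Definition sig_at (sigma : blocking) (i : 'I_N) (t : nat) : bool :=
  if insub t is Some t' then sigma i t' else true.

Definition sched_at (s : 'I_T -> 'I_N) (t : nat) : option 'I_N :=
  if insub t is Some t' then Some (s t') else None.

(* age a_i(t+1) (0-indexed t): a_i at index 0 is 1; reset to 1 after a
   successful (scheduled and unblocked) slot, otherwise increment. *)
Fixpoint age (sigma : blocking) (s : 'I_T -> 'I_N) (i : 'I_N) (t : nat) : nat :=
  match t with
  | 0 => 1
  | t'.+1 => if (sched_at s t' == Some i) && sig_at sigma i t' then 1
             else (age sigma s i t').+1
  end.

Definition avg_age (sigma : blocking) (s : 'I_T -> 'I_N) : R :=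
  (T%:R)^-1 * \sum_(t < T) ((N%:R)^-1 * \sum_(i < N) (age sigma s i t)%:R).

(* deterministic adaptive policy: slot t's choice is a function of the
   blocking matrix, required to depend only on the columns of slots < t *)
Definition det_policy := 'I_T -> blocking -> 'I_N.

Definition causal (p : det_policy) : Prop :=
  forall (t : 'I_T) (s1 s2 : blocking),
    (forall (i : 'I_N) (u : 'I_T), (u < t)%N -> s1 i u = s2 i u) ->
    p t s1 = p t s2.

(* randomized policy: a finite probability mixture of causal deterministic
   policies *)
Definition rand_policy := seq (R * det_policy).

Definition valid_policy (rp : rand_policy) : Prop :=
  (forall wp, wp \in rp -> 0 <= wp.1) /\
  \sum_(wp <- rp) wp.1 = 1 /\
  (forall wp, wp \in rp -> causal wp.2).

Definition Delta (rp : rand_policy) (sigma : blocking) : R :=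
  \sum_(wp <- rp) wp.1 * avg_age sigma (fun t => wp.2 t sigma).

(* Delta^{unif,sigma}: each slot independently uniform, i.e. the schedule
   is uniform over all N^T schedules *)
Definition Delta_unif (sigma : blocking) : R :=
  \sum_(s : {ffun 'I_T -> 'I_N}) ((N ^ T)%:R)^-1 * avg_age sigma s.

Definition Delta_star (alpha : R) : R :=
  sup [set x : R | exists sigma, feasible alpha sigma /\
        x = inf [set y : R | exists rp, valid_policy rp /\ y = Delta rp sigma]].

Definition worst_unif (alpha : R) : R :=
  sup [set x : R | exists sigma, feasible alpha sigma /\ x = Delta_unif sigma].

End Model.

From HB Require Import structures.
From mathcomp Require Import all_boot all_order all_algebra perm.
From mathcomp Require Import boolp classical_sets reals.
From mathcomp Require Import ring lra zify.
Set Implicit Arguments.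
Unset Strict Implicit.
Unset Printing Implicit Defensive.
Import Order.TTheory GRing.Theory Num.Theory.
Local Open Scope ring_scope.

(* Under uniform scheduling the user served in slot t is uniform and independent of the
   ages at slot t, which only depend on earlier slots; hence the expected ages satisfy
   N m_i(t+1) = N + (N - sigma_i(t)) m_i(t).  At most one user is blocked per slot and
   every age at slot t is at most t + 1, so the total S(t) = sum_i m_i(t) obeys
   N S(t+1) <= N^2 + (N - 1) S(t) + t + 1, which keeps S(t) <= N^2 + t + 1 and gives
   Delta^{unif,sigma} <= N + (T + 1)/(2N) for every feasible sigma.
   Conversely, blocking one user during the first k = alpha T slots makes its age t + 1
   in these slots whatever is scheduled, so Delta^*(T) >= k (k + 1)/(2TN).  The ratio of
   the two bounds, (2N^2 + T + 1)/(alpha (alpha T + 1)), tends to 1/alpha^2. *)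

Lemma sum_succ_natr (R : pzSemiRingType) n :
  2 * \sum_(t < n) t.+1%:R = (n * n.+1)%:R :> R.
Proof.
elim: n => [|n IH]; first by rewrite big_ord0 mulr0.
by rewrite big_ord_recr mulrDr IH /= -natrM -natrD; congr _%:R; lia.
Qed.

Lemma card_classical_set (T : finType) (P : pred T) :
  #|[set x | P x]%classic| = #|[set x | P x]|.
Proof. by apply: eq_card => x; rewrite inE; apply/idP/idP => [/set_mem|/mem_set]. Qed.

Lemma sum_le_of_card_le1 (R : numDomainType) (I : finType) (A : {set I}) (x : I -> R) (c : R) :
  (#|A| <= 1)%N -> 0 <= c -> (forall i, i \in A -> x i <= c) -> \sum_(i in A) x i <= c.
Proof.
move=> A_le1 c_ge0 x_le; apply: le_trans (ler_sum _ x_le) _.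
by rewrite sumr_const -mulr_natr ler_piMr // (ler_nat _ _ 1).
Qed.

Lemma mean_le (R : numFieldType) (I : finType) (x : I -> R) (c : R) :
  0 <= c -> (forall i, x i <= c) -> #|I|%:R^-1 * \sum_i x i <= c.
Proof.
move=> c_ge0 x_le; have [I0|I_gt0] := posnP #|I|.
  by rewrite I0 invr0 mul0r.
apply: le_trans (ler_wpM2l _ (ler_sum _ (fun i _ => x_le i))) _.
  by rewrite invr_ge0 ler0n.
by rewrite sumr_const -[c *+ _]mulr_natl mulKf ?pnatr_eq0 -?lt0n.
Qed.

Lemma sum_ffun_coord_indep (R : pzSemiRingType) (aT rT : finType) (a : aT)
    (h : rT -> R) (g : {ffun aT -> rT} -> R) :
  (forall f f' : {ffun aT -> rT}, (forall x, x != a -> f x = f' x) -> g f = g f') ->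
  #|rT|%:R * \sum_(f : {ffun aT -> rT}) h (f a) * g f = (\sum_y h y) * \sum_f g f.
Proof.
move=> g_indep.
pose A y := \sum_(f : {ffun aT -> rT} | f a == y) g f.
have A_const y y' : A y' = A y.
  pose swap (f : {ffun aT -> rT}) : {ffun aT -> rT} :=
     [ffun x => if x == a then tperm y y' (f x) else f x].
  have swapK : involutive swap.
    by move=> f; apply/ffunP => x; rewrite !ffunE; case: eqP => // _; rewrite tpermK.
  rewrite /A (reindex_inj (can_inj swapK)) /=.
  apply: eq_big => [f|f _].
    by rewrite ffunE eqxx -[X in _ == X](tpermL y y') (can_eq (tpermK y y')).
  by apply: g_indep => x /negPf x_a; rewrite ffunE x_a.
have -> : \sum_f g f = \sum_y A y.
  by rewrite (partition_big (fun f : {ffun aT -> rT} => f a) xpredT).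
have -> : \sum_(f : {ffun aT -> rT}) h (f a) * g f = \sum_y h y * A y.
  rewrite (partition_big (fun f : {ffun aT -> rT} => f a) xpredT) //=; apply: eq_bigr => y _.
  by rewrite /A mulr_sumr; apply: eq_bigr => f /eqP ->.
rewrite mulr_sumr mulr_suml; apply: eq_bigr => y _.
by rewrite (eq_bigr _ (fun y' _ => A_const y y')) sumr_const mulr_natl mulrnAr.
Qed.

Section Age.
Variables (N T : nat) (sigma : blocking N T).
Implicit Types (s : 'I_T -> 'I_N) (i : 'I_N).

Lemma age_le s i t : (age sigma s i t <= t.+1)%N.
Proof. by elim: t => //= t IH; case: ifP. Qed.

Lemma ageS s i (t : 'I_T) :
  age sigma s i t.+1 = if (s t == i) && sigma i t then 1%N else (age sigma s i t).+1.
Proof. by rewrite /= /sched_at /sig_at valK. Qed.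

Lemma eq_age_past s1 s2 i t :
  (forall u : 'I_T, (u < t)%N -> s1 u = s2 u) -> age sigma s1 i t = age sigma s2 i t.
Proof.
elim: t => //= t IH s12; rewrite IH => [|u /ltnW]; last exact: s12.
by rewrite /sched_at; case: insubP => // u _ u_t; rewrite s12 // u_t.
Qed.

Lemma age_blocked_prefix s i t : (t <= T)%N ->
  (forall u : 'I_T, (u < t)%N -> ~~ sigma i u) -> age sigma s i t = t.+1.
Proof.
elim: t => //= t IH t_lt_T blocked.
have -> : sig_at sigma i t = false.
  rewrite /sig_at; case: insubP => [u _ u_t|]; last by rewrite t_lt_T.
  by apply: negbTE; apply: blocked; rewrite u_t.
by rewrite andbF IH ?(ltnW t_lt_T) // => u /ltnW; exact: blocked.
Qed.

End Age.

Section Policies.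
Variables (R : realType) (N T : nat).
Hypothesis N_gt0 : (0 < N)%N.
Implicit Types (sigma : blocking N T) (rp : rand_policy R N T).
Local Open Scope classical_set_scope.

Lemma avg_age_ge0 sigma s : 0 <= avg_age R sigma s.
Proof.
rewrite /avg_age mulr_ge0 ?invr_ge0 ?ler0n ?sumr_ge0 // => t _.
by rewrite mulr_ge0 ?invr_ge0 ?ler0n ?sumr_ge0.
Qed.

Lemma avg_age_le sigma s : avg_age R sigma s <= T%:R.
Proof.
have := @mean_le R 'I_T; have := @mean_le R 'I_N; rewrite !card_ord => meanN meanT.
apply: meanT => [|t]; first exact: ler0n.
apply: meanN => [|i]; first exact: ler0n.
by rewrite ler_nat (leq_trans (age_le sigma s i t)).
Qed.

Lemma Delta_ge rp sigma (c : R) :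
  valid_policy rp -> (forall s, c <= avg_age R sigma s) -> c <= Delta rp sigma.
Proof.
move=> [w_ge0 [w_sum1 _]] c_le; rewrite -[c]mul1r -w_sum1 mulr_suml /Delta !big_seq.
by apply: ler_sum => wp wp_rp; rewrite ler_wpM2l ?w_ge0.
Qed.

Definition const_policy (i : 'I_N) : rand_policy R N T := [:: (1, fun _ _ => i)].

Lemma const_policy_valid i : valid_policy (const_policy i).
Proof.
split; first by move=> wp; rewrite inE => /eqP ->; exact: ler01.
by split=> [|wp]; rewrite ?big_seq1 // inE => /eqP ->.
Qed.

Definition opt_Delta sigma : R :=
  inf [set y | exists rp, valid_policy rp /\ y = Delta rp sigma].

Lemma opt_Delta_ge sigma (c : R) :
  (forall s, c <= avg_age R sigma s) -> c <= opt_Delta sigma.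
Proof.
move=> c_le; apply: lb_le_inf => [|_ [rp [rp_valid ->]]]; last exact: Delta_ge.
exists (Delta (const_policy (Ordinal N_gt0)) sigma).
by exists (const_policy (Ordinal N_gt0)); split; first exact: const_policy_valid.
Qed.

Lemma opt_Delta_le sigma : opt_Delta sigma <= T%:R.
Proof.
have const_in : [set y | exists rp, valid_policy rp /\ y = Delta rp sigma]
                  (Delta (const_policy (Ordinal N_gt0)) sigma).
  by exists (const_policy (Ordinal N_gt0)); split; first exact: const_policy_valid.
apply: le_trans (ge_inf _ const_in) _.
  exists 0 => _ [rp [rp_valid ->]]; exact: Delta_ge rp_valid (avg_age_ge0 sigma).
by rewrite /Delta big_seq1 mul1r avg_age_le.
Qed.

Lemma opt_Delta_le_Delta_star alpha sigma :
  feasible alpha sigma -> opt_Delta sigma <= Delta_star N T alpha.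
Proof.
move=> feas; apply: ub_le_sup; last by exists sigma.
by exists T%:R => _ [sigma' [_ ->]]; exact: opt_Delta_le.
Qed.

End Policies.

Section Uniform.
Variables (R : realType) (N T : nat) (sigma : blocking N T).
Hypothesis N_gt0 : (0 < N)%N.

Definition mean_age i t : R :=
  ((N ^ T)%:R)^-1 * \sum_(f : {ffun 'I_T -> 'I_N}) (age sigma f i t)%:R.

Lemma card_schedules : #|{ffun 'I_T -> 'I_N}| = (N ^ T)%N.
Proof. by rewrite card_ffun !card_ord. Qed.

Lemma card_schedules_neq0 : ((N ^ T)%:R : R) != 0.
Proof. by rewrite pnatr_eq0 -lt0n expn_gt0 N_gt0. Qed.

Lemma mean_age0 i : mean_age i 0 = 1.
Proof.
by rewrite /mean_age sumr_const card_schedules -mulr_natl mulr1 mulVf ?card_schedules_neq0.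
Qed.

Lemma mean_age_le i t : mean_age i t <= t.+1%:R.
Proof. by rewrite /mean_age -card_schedules mean_le // => f; rewrite ler_nat age_le. Qed.

Lemma mean_ageS i (t : 'I_T) :
  N%:R * mean_age i t.+1 = N%:R + (N%:R - (sigma i t)%:R) * mean_age i t.
Proof.
pose b (j : 'I_N) : R := ((j == i) && sigma i t)%:R.
pose g (f : {ffun 'I_T -> 'I_N}) : R := (age sigma f i t)%:R.
have ageS_real (f : {ffun 'I_T -> 'I_N}) : (age sigma f i t.+1)%:R = 1 + g f - b (f t) * g f.
  by rewrite ageS /b /g; case: (_ && _); rewrite ?mul1r ?mul0r ?subr0 ?addrK // -natr1 addrC.
have g_indep (f f' : {ffun 'I_T -> 'I_N}) : (forall u, u != t -> f u = f' u) -> g f = g f'.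
  by move=> ff'; congr _%:R; apply: eq_age_past => u u_t; apply: ff'; rewrite neq_ltn u_t.
have sum_b : \sum_j b j = (sigma i t)%:R.
  by rewrite (bigD1 i) //= big1 ?addr0 /b ?eqxx // => j /negPf ->.
have := sum_ffun_coord_indep b g_indep; rewrite card_ord sum_b => indep.
rewrite /mean_age (eq_bigr _ (fun f _ => ageS_real f)) sumrB big_split /= sumr_const.
rewrite card_schedules -[1 *+ _]mulr_natl mulr1.
have -> : \sum_(f : {ffun 'I_T -> 'I_N}) b (f t) * g f =
          N%:R^-1 * ((sigma i t)%:R * \sum_f g f).
  by rewrite -indep mulKf // pnatr_eq0 -lt0n.
field; rewrite card_schedules_neq0 pnatr_eq0 -lt0n N_gt0 //.
Qed.

Lemma Delta_unif_mean :
  Delta_unif R sigma = T%:R^-1 * \sum_(t < T) N%:R^-1 * \sum_i mean_age i t.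
Proof.
rewrite /Delta_unif /avg_age /mean_age -mulr_sumr -[in LHS]mulr_sumr mulrCA.
congr (_ * _); rewrite exchange_big mulr_sumr; apply: eq_bigr => t _ /=.
by rewrite -mulr_sumr mulrCA exchange_big mulr_sumr.
Qed.

Hypothesis one_block : forall t : 'I_T, (#|[set i : 'I_N | ~~ sigma i t]| <= 1)%N.

Lemma sum_mean_age_le t : (t <= T)%N -> \sum_i mean_age i t <= N%:R ^+ 2 + t.+1%:R.
Proof.
have N_ge1 : (1 : R) <= N%:R by rewrite (ler_nat _ 1).
elim: t => [_|t IH t_lt_T].
  rewrite (eq_bigr _ (fun i _ => mean_age0 i)) sumr_const card_ord; nra.
pose t' := Ordinal t_lt_T.
set S := \sum_i mean_age i t; have S_le := IH (ltnW t_lt_T).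
set B := \sum_(i in [set i | ~~ sigma i t']) mean_age i t.
have B_le : B <= t.+1%:R.
  by apply: sum_le_of_card_le1 (one_block t') _ (fun i _ => mean_age_le i t).
have B_eq : B = \sum_i (~~ sigma i t')%:R * mean_age i t.
  rewrite /B big_mkcond; apply: eq_bigr => i _; rewrite inE.
  by case: (sigma i t'); rewrite ?mul1r ?mul0r.
have step : N%:R * \sum_i mean_age i t.+1 = N%:R ^+ 2 + (N%:R - 1) * S + B.
  rewrite mulr_sumr (eq_bigr _ (fun i _ => mean_ageS i t')) big_split /= sumr_const card_ord.
  rewrite -[_ *+ N]mulr_natl -expr2 -addrA mulr_sumr B_eq -big_split /=.
  congr (_ + _); apply: eq_bigr => i _.
  by case: (sigma i t'); rewrite /= ?mul1r ?mul0r; ring.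
have N_pos : (0 : R) < N%:R by rewrite ltr0n.
rewrite -(ler_pM2l N_pos) step -natr1.
have : 0 <= (N%:R - 1) * (N%:R ^+ 2 + t.+1%:R - S) by rewrite mulr_ge0 ?subr_ge0.
nra.
Qed.

Lemma Delta_unif_le : (0 < T)%N ->
  Delta_unif R sigma <= N%:R + (T%:R + 1) / (2 * N%:R).
Proof.
move=> T_gt0; rewrite Delta_unif_mean.
apply: (@le_trans _ _ (T%:R^-1 * \sum_(t < T) N%:R^-1 * (N%:R ^+ 2 + t.+1%:R))).
  rewrite ler_wpM2l ?invr_ge0 ?ler0n // ler_sum // => t _.
  by rewrite ler_wpM2l ?invr_ge0 ?ler0n // sum_mean_age_le // ltnW.
have sum_succ : \sum_(t < T) t.+1%:R = (T * T.+1)%:R / 2 :> R.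
  by rewrite -sum_succ_natr mulrC mulKf ?pnatr_eq0.
rewrite -mulr_sumr big_split /= sumr_const card_ord sum_succ natrM -natr1 -mulr_natr.
rewrite le_eqVlt; apply/orP; left; apply/eqP.
by field; rewrite !pnatr_eq0 -!lt0n T_gt0 N_gt0.
Qed.

End Uniform.

Lemma feasible_unblocked (R : realType) N T (alpha : R) :
  0 <= alpha -> feasible alpha (const_mx true : blocking N T).
Proof.
move=> alpha_ge0; split=> [|t]; rewrite card_classical_set.
  by rewrite (eq_card0 (fun p => _)) ?mulr_ge0 // => p; rewrite !inE mxE.
by rewrite (eq_card0 (fun i => _)) // => i; rewrite !inE mxE.
Qed.

Lemma worst_unif_le (R : realType) N T (alpha : R) :
  (0 < N)%N -> (0 < T)%N -> 0 <= alpha ->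
  worst_unif N T alpha <= N%:R + (T%:R + 1) / (2 * N%:R).
Proof.
move=> N_gt0 T_gt0 alpha_ge0; apply: ge_sup.
  by exists (Delta_unif R (const_mx true : blocking N T)), (const_mx true); split;
    first exact: feasible_unblocked.
move=> _ [sigma [[_ one_block] ->]]; apply: Delta_unif_le => // t.
by rewrite -card_classical_set.
Qed.

Section PrefixBlocking.
Variables (R : realType) (N T k : nat) (i0 : 'I_N).
Hypothesis k_le_T : (k <= T)%N.

Definition block_prefix : blocking N T := \matrix_(i, t) ~~ ((i == i0) && (t < k)%N).

Lemma feasible_block_prefix (alpha : R) :
  k%:R <= alpha * T%:R -> feasible alpha block_prefix.
Proof.
move=> k_le; split=> [|t]; rewrite card_classical_set.
  apply: le_trans k_le; rewrite ler_nat.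
  have -> : [set p : 'I_N * 'I_T | ~~ block_prefix p.1 p.2] =
            finset.setX [set i0] [set widen_ord k_le_T u | u in 'I_k].
    apply/setP => -[i t]; rewrite !inE mxE negbK /=; congr (_ && _).
    apply/idP/imsetP => [t_lt_k|[u _ ->]]; last exact: (ltn_ord u).
    by exists (Ordinal t_lt_k); last exact: val_inj.
  by rewrite (cardsX [set i0]) cards1 mul1n (leq_trans (leq_imset_card _ _)) ?card_ord.
rewrite -(cards1 i0) subset_leq_card //; apply/fintype.subsetP => i.
by rewrite !inE mxE negbK => /andP [].
Qed.

Lemma avg_age_block_prefix s : (0 < N)%N -> (0 < T)%N ->
  (k * k.+1)%:R / (2 * T%:R * N%:R) <= avg_age R block_prefix s.
Proof.
move=> N_gt0 T_gt0.
have age_i0 : \sum_(t < k) t.+1%:R <= \sum_(t < T) (age block_prefix s i0 t)%:R :> R.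
  rewrite (big_ord_widen T (fun t => t.+1%:R) k_le_T) big_mkcond ler_sum // => t _.
  case: ifP => t_lt_k; last exact: ler0n.
  rewrite age_blocked_prefix ?(ltnW (ltn_ord t)) // => u u_lt_t.
  by rewrite mxE eqxx (ltn_trans u_lt_t t_lt_k).
apply: (@le_trans _ _ (T%:R^-1 * \sum_(t < T) N%:R^-1 * (age block_prefix s i0 t)%:R)).
  rewrite -mulr_sumr -sum_succ_natr (_ : _ / _ = T%:R^-1 * (N%:R^-1 * \sum_(t < k) t.+1%:R)).
    by rewrite !ler_wpM2l ?invr_ge0 ?ler0n.
  by field; rewrite !pnatr_eq0 -!lt0n T_gt0 N_gt0.
rewrite ler_wpM2l ?invr_ge0 ?ler0n // ler_sum // => t _.
rewrite ler_wpM2l ?invr_ge0 ?ler0n // (bigD1 i0) //= lerDl.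
by apply: sumr_ge0 => i _; exact: ler0n.
Qed.

End PrefixBlocking.

Lemma Delta_star_ge (R : realType) N T k (alpha : R) :
  (0 < N)%N -> (0 < T)%N -> (k <= T)%N -> k%:R <= alpha * T%:R ->
  (k * k.+1)%:R / (2 * T%:R * N%:R) <= Delta_star N T alpha.
Proof.
move=> N_gt0 T_gt0 k_le_T k_le.
pose i0 := Ordinal N_gt0.
apply: le_trans (opt_Delta_le_Delta_star N_gt0 (feasible_block_prefix i0 k_le_T k_le)).
by apply: opt_Delta_ge => // s; apply: avg_age_block_prefix.
Qed.

Lemma worst_unif_ratio_le (R : realType) N T k (alpha : R) :
  (0 < N)%N -> (0 < T)%N -> 0 < alpha -> alpha <= 1 -> alpha * T%:R = k%:R ->
  worst_unif N T alpha / Delta_star N T alpha <=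
    (2 * N%:R ^+ 2 + T%:R + 1) / (alpha * (alpha * T%:R + 1)).
Proof.
move=> N_gt0 T_gt0 alpha_gt0 alpha_le1 alphaT_k.
have [N_pos T_pos] : (0 : R) < N%:R /\ (0 : R) < T%:R by rewrite !ltr0n.
have k_le_T : (k <= T)%N by rewrite -(ler_nat R) -alphaT_k ler_piMl ?ler0n.
pose U : R := N%:R + (T%:R + 1) / (2 * N%:R).
pose L : R := alpha * T%:R * (alpha * T%:R + 1) / (2 * T%:R * N%:R).
have upper : worst_unif N T alpha <= U := worst_unif_le N_gt0 T_gt0 (ltW alpha_gt0).
have lower : L <= Delta_star N T alpha.
  rewrite /L alphaT_k natr1 -natrM; apply: Delta_star_ge => //.
  by rewrite alphaT_k.
have U_ge0 : 0 <= U by rewrite addr_ge0 ?divr_ge0 ?addr_ge0 ?mulr_ge0 ?ler0n.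
have L_gt0 : 0 < L by rewrite divr_gt0 ?mulr_gt0 ?addr_gt0 ?mulr_gt0.
have Delta_star_gt0 : 0 < Delta_star N T alpha := lt_le_trans L_gt0 lower.
apply: (@le_trans _ _ (U / L)).
  apply: (@le_trans _ _ (U / Delta_star N T alpha)).
    by rewrite ler_wpM2r // invr_ge0 ltW.
  by rewrite ler_wpM2l // lef_pV2 ?posrE.
rewrite le_eqVlt; apply/orP; left; apply/eqP.
by rewrite /U /L; field; rewrite !gt_eqF // addr_gt0 ?mulr_gt0.
Qed.

Lemma ratio_le_inv_sqr_add (R : realFieldType) (n t a e : R) :
  0 < a -> a <= 1 -> 0 < e -> 2 * n ^+ 2 / (e * a ^+ 2) < t ->
  (2 * n ^+ 2 + t + 1) / (a * (a * t + 1)) <= a ^- 2 + e.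
Proof.
move=> a_gt0 a_le1 e_gt0 t_large.
have ea2_gt0 : 0 < e * a ^+ 2 by rewrite mulr_gt0 // exprn_gt0.
have t_gt0 : 0 < t.
  by apply: le_lt_trans t_large; rewrite divr_ge0 ?(ltW ea2_gt0) // mulr_ge0 ?sqr_ge0.
rewrite ltr_pdivrMr // in t_large.
have a_inv_ge1 : 1 <= a^-1 by rewrite invf_ge1.
have ea_ge0 : 0 <= e * a by rewrite mulr_ge0 // ltW.
rewrite ler_pdivrMr; last by rewrite mulr_gt0 ?addr_gt0 ?mulr_gt0.
have -> : (a ^- 2 + e) * (a * (a * t + 1)) = t + a^-1 + e * a ^+ 2 * t + e * a.
  by field; rewrite gt_eqF.
lra.
Qed.

Theorem theorem3 (R : realType) (N : nat) (alpha : R) :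
  (2 <= N)%N -> 0 < alpha -> alpha < 1 ->
  forall eps : R, 0 < eps ->
  exists T0 : nat, forall T : nat, (T0 <= T)%N ->
    (exists k : nat, alpha * T%:R = k%:R) ->
    worst_unif N T alpha / Delta_star N T alpha <= alpha ^- 2 + eps.
Proof.
move=> N_ge2 alpha_gt0 alpha_lt1 eps eps_gt0.
pose T_min := 2 * N%:R ^+ 2 / (eps * alpha ^+ 2).
have T_min_ge0 : 0 <= T_min by rewrite divr_ge0 ?mulr_ge0 ?exprn_ge0 ?ler0n ?ltW.
exists (Num.Def.archi_bound T_min).+1 => T T_min_lt_T [k alphaT_k].
have T_large : T_min < T%:R.
  by apply: lt_le_trans (archi_boundP T_min_ge0) _; rewrite ler_nat ltnW.
apply: le_trans (worst_unif_ratio_le _ _ alpha_gt0 (ltW alpha_lt1) alphaT_k) _.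
- exact: ltnW.
- exact: leq_trans T_min_lt_T.
- exact: ratio_le_inv_sqr_add (ltW alpha_lt1) eps_gt0 T_large.
Qed.
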